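(* Fix $\theta$ with $\phi(\theta)<\beta$ and fix $Q\in\{0,1\}$. Then $$\lim_{\tau\to\tau^\star(\theta)^+}u(s_1(\theta,\tau))=\lim_{\tau\to\tau^\star(\theta)^-}u(s_2(\theta,\tau)).$$
   Context: Setup. Let $Q\in\{0,1\}$ be a random variable with $\mathbb P(Q=1)=\pi\in(0,1)$, and let $(\Theta,\Gamma)$ be a real-valued random vector whose conditional joint density given $Q=1$ is $h_q$ and given $Q=0$ is $h_u$, both strictly positive on $\mathbb R^2$. Monotone likelihood ratio assumption: $l(\theta,\gamma)=h_q(\theta,\gamma)/h_u(\theta,\gamma)$ is continuous and strictly increasing in each of $\theta$ and $\gamma$, and for each $\theta$ the map $\gamma\mapsto l(\theta,\gamma)$ has infimum $0$ and supremum $+\infty$. Fix payoffs $x_q>0$, $x_u>0$. For $\tau\in(-x_u,x_q)$ let $A(\tau)=\mathbb 1\{l(\Theta,\Gamma)>\frac{(1-\pi)(x_u+\tau)}{\pi(x_q-\tau)}\}$, $s_1(\theta,\tau)=\mathbb E[Q\mid\Theta=\theta,A(\tau)=1]$, $s_2(\theta,\tau)=\mathbb E[A(\tau)\mid\Theta=\theta]$, $\phi(\theta)=\mathbb P(Q=1\mid\Theta=\theta)$. The equalizing prejudice $\tau^\star(\theta)$ is the unique $\tau\in(-x_u,x_q)$ with $s_1(\theta,\tau)=s_2(\theta,\tau)$. Regret. Fix a cutoff $c\in(-x_u,x_q)$ and let $\beta=(x_u+c)/(x_q+x_u)\in(0,1)$. For a score value $s\in[0,1]$ and a qualification value $Q\in\{0,1\}$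 define $\mathcal N(s)=sx_q-(1-s)x_u$, $A'(s)=\mathbb 1\{\mathcal N(s)>c\}$ (i.e. $s>\beta$), $\mathcal P(s)=A'(s)(Qx_q-(1-Q)x_u)$, and the individual regret $u(s)=\mathcal N(s)-\mathcal P(s)$. For a fixed applicant $(\theta,Q)$, $u(s_k(\theta,\tau))$ is viewed as a function of $\tau\in(-x_u,x_q)$. *)

From HB Require Import structures.
From mathcomp Require Import all_boot all_order all_algebra.
From mathcomp Require Import all_classical all_reals all_analysis.
Set Implicit Arguments. Unset Strict Implicit. Unset Printing Implicit Defensive.
Import Order.TTheory GRing.Theory Num.Theory.
Import numFieldNormedType.Exports.
Local Open Scope classical_set_scope.
Local Open Scope ring_scope.

Section Model.
Variables (R : realType) (hq hu : R -> R -> R) (pi xq xu : R).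

Definition lratio (t g : R) : R := hq t g / hu t g.

Definition thr (tau : R) : R := ((1 - pi) * (xu + tau)) / (pi * (xq - tau)).

(* {gamma | A(tau) = 1} at Theta = theta *)
Definition accset (t tau : R) : set R := [set g | thr tau < lratio t g].

Definition smass (h : R -> R -> R) (t : R) (D : set R) : R :=
  Rintegral (@lebesgue_measure R) D (h t).

(* joint sub-density of (Theta = t, A(tau) = 1) *)
Definition accmass (t tau : R) : R :=
  pi * smass hq t (accset t tau) + (1 - pi) * smass hu t (accset t tau).

(* marginal density of Theta at t *)
Definition margmass (t : R) : R :=
  pi * smass hq t setT + (1 - pi) * smass hu t setT.

(* s_1(theta,tau) = E[Q | Theta = theta, A(tau) = 1] *)
Definition s1 (t tau : R) : R := pi * smass hq t (accset t tau) / accmass t tau.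

(* s_2(theta,tau) = E[A(tau) | Theta = theta] *)
Definition s2 (t tau : R) : R := accmass t tau / margmass t.

(* phi(theta) = P(Q = 1 | Theta = theta) *)
Definition phi (t : R) : R := pi * smass hq t setT / margmass t.
End Model.

Section Regret.
Variables (R : realType) (xq xu c : R).

Definition beta : R := (xu + c) / (xq + xu).
Definition Nval (s : R) : R := s * xq - (1 - s) * xu.
Definition Aprime (s : R) : bool := c < Nval s.
(* Q : bool, true = qualified (Q = 1) *)
Definition Pval (s : R) (Q : bool) : R :=
  (if Aprime s then 1 else 0) * ((if Q then 1 else 0) * xq - (1 - (if Q then 1 else 0)) * xu).
Definition regret (s : R) (Q : bool) : R := Nval s - Pval s Q.
End Regret.

From Pilot Require Import Defs.
From HB Require Import structures.
From mathcomp Require Import all_boot all_order all_algebra.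
From mathcomp Require Import all_classical all_reals all_analysis.
From mathcomp Require Import ring lra.
Set Implicit Arguments. Unset Strict Implicit. Unset Printing Implicit Defensive.
Import Order.TTheory GRing.Theory Num.Theory.
Import numFieldNormedType.Exports.
Local Open Scope classical_set_scope.
Local Open Scope ring_scope.

(* The monotone likelihood ratio turns the acceptance region at a fixed
   [theta] into a half-line ]T(tau), +oo[ whose cutoff T(tau), the preimage of
   the threshold under gamma |-> l(theta, gamma), is continuous and strictly
   increasing in tau.  Raising the cutoff strictly increases
   s1 = E[Q | accepted] (the ratio of the tails of h_q and h_u increases) and
   strictly decreases s2 = P(accepted), both continuously.  Hence, with s0 the
   common value of s1 and s2 at tau*, s1 tends to s0 from above as tau -> tau*+,
   and so does s2 as tau -> tau*-.  The regret is a function of the score alone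
   whose limit from above exists at every point, so both one-sided limits
   coincide. *)

Section IntegrableArith.
Context {d} {T : measurableType d} {R : realType} (mu : {measure set T -> \bar R}).
Variables (D : set T) (f g : T -> R).
Hypothesis mD : measurable D.

Lemma integrableZl_real k : mu.-integrable D (EFin \o f) ->
  mu.-integrable D (EFin \o (fun x => k * f x)).
Proof.
move=> fi; apply: (eq_integrable mD _ _ _ (integrableZl mD k fi)).
by move=> x _; rewrite /= EFinM.
Qed.

Lemma integrableB_real : mu.-integrable D (EFin \o f) ->
  mu.-integrable D (EFin \o g) -> mu.-integrable D (EFin \o (fun x => f x - g x)).
Proof.
move=> fi gi; apply: (eq_integrable mD _ _ _ (integrableB mD fi gi)).
by move=> x _; rewrite /= EFinB.
Qed.
End IntegrableArith.

Section TailIntegral.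
Variable R : realType.
Local Notation mu := (@lebesgue_measure R).

Definition tail_integral (f : R -> R) (a : R) := \int[mu]_(x in `]a, +oo[) f x.

Variable f : R -> R.
Hypothesis f_int : mu.-integrable [set: R] (EFin \o f).

Lemma Rintegral_itv_oc_gt0 a b : (forall x, x \in `]a, b] -> 0 < f x) ->
  a < b -> 0 < \int[mu]_(x in `]a, b]) f x.
Proof.
move=> fp ab.
have mD : measurable (`]a, b] : set (measurableTypeR R)) by [].
have fiD : mu.-integrable `]a, b] (EFin \o f) by exact: integrableS f_int.
rewrite lt_def Rintegral_ge0 ?andbT; last by move=> x xD; apply/ltW/fp.
apply/eqP => int0.
have int_abs0 : (\int[mu]_(x in `]a, b]) `|(f x)%:E|)%E = 0.
  transitivity (\int[mu]_(x in `]a, b]) (EFin \o f) x)%E.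
    apply: eq_integral => x xD; rewrite gee0_abs// lee_fin.
    by apply/ltW/fp; exact: set_mem.
  by rewrite -(fineK (integrable_fin_num mD fiD)); move: int0; rewrite /Rintegral => ->.
have /integrableP[mf _] := fiD.
have [N [mN N0 sub]] := (ae_eq_integral_abs mu mD mf).1 int_abs0.
have : (mu `]a, b] <= mu N)%E.
  apply: le_measure; rewrite ?inE//.
  move=> x xD; apply: sub => /= /(_ xD) /eqP.
  by rewrite /cst eqe (gt_eqF (fp x xD)).
by rewrite N0 lebesgue_measure_itv/= lte_fin ab lee_fin subr_le0 leNgt ab.
Qed.

Lemma tail_integral_split a b : a <= b ->
  tail_integral f a = \int[mu]_(x in `]a, b]) f x + tail_integral f b.
Proof.
move=> ab; rewrite /tail_integral (@itv_bndbnd_setU _ _ _ (BRight b)) ?bnd_simp//.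
rewrite Rintegral_setU//.
- by apply: integrableS f_int => //; exact: measurableU.
- apply/disj_set2P; rewrite -subset0 => z/=; rewrite !in_itv/= => -[/andP[_]].
  by move=> zb /andP[bz _]; move: (lt_le_trans bz zb); rewrite ltxx.
Qed.

Lemma tail_integral_continuous : continuous (tail_integral f).
Proof.
move=> x; apply/cvgrPdist_le => /= e e0.
have [d [d0 small_int]] := integral_normr_continuous f_int e0.
have close y z : y <= z -> z - y < d -> `|tail_integral f y - tail_integral f z| <= e.
  move=> yz zyd; rewrite (tail_integral_split yz) addrK.
  apply: le_trans (le_normr_Rintegral _ _) _ => //; first exact: integrableS f_int.
  apply/ltW/small_int => //.
  have := lebesgue_measure_itv `]y, z]; rewrite /= => ->.
  case: ifP => _; last by rewrite lte_fin.
  by rewrite -EFinD lte_fin.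
exists d => //= y /= xy.
have [xley|ylex] := leP x y.
- by apply: close => //; move: xy; rewrite distrC ger0_norm ?subr_ge0.
- rewrite distrC; apply: close; first exact: ltW.
  by move: xy; rewrite ger0_norm ?subr_ge0// ltW.
Qed.

Lemma tail_integral_gt0 b : (forall x, b < x -> 0 < f x) -> 0 < tail_integral f b.
Proof.
move=> fp; rewrite (@tail_integral_split b (b + 1)) ?lerDl//.
apply: ltr_pwDl.
  apply: Rintegral_itv_oc_gt0; last by rewrite ltrDl.
  by move=> x; rewrite in_itv /= => /andP[bx _]; exact: fp.
apply: Rintegral_ge0 => x; rewrite /= in_itv /= andbT => bx.
by apply/ltW/fp; apply: lt_trans bx; rewrite ltrDl.
Qed.

Lemma tail_integral_lt a b : (forall x, 0 < f x) ->
  a < b -> tail_integral f b < tail_integral f a.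
Proof.
move=> fp ab; rewrite (tail_integral_split (ltW ab)) ltrDr.
exact: Rintegral_itv_oc_gt0.
Qed.

Lemma Rintegral_setT_gt0 : (forall x, 0 < f x) -> 0 < \int[mu]_x f x.
Proof.
move=> fp; rewrite -(set_itvNyy R) (@itv_bndbnd_setU _ _ _ (BRight 0)) //.
rewrite Rintegral_setU //.
- apply: ltr_wpDl; first by apply: Rintegral_ge0 => x _; exact/ltW.
  exact: tail_integral_gt0.
- by rewrite -itv_bndbnd_setU // set_itvNyy.
- apply/disj_set2P; rewrite -subset0 => z/=; rewrite !in_itv/= => -[].
  by move=> z0 /andP[/(le_lt_trans z0)]; rewrite ltxx.
Qed.
End TailIntegral.

Section TailRatio.
Variable R : realType.
Local Notation mu := (@lebesgue_measure R).
Variables fq fu : R -> R.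
Hypotheses (fq_gt0 : forall x, 0 < fq x) (fu_gt0 : forall x, 0 < fu x).
Hypotheses (fq_int : mu.-integrable [set: R] (EFin \o fq))
           (fu_int : mu.-integrable [set: R] (EFin \o fu)).
Hypothesis ratio_incr : {homo (fun x => fq x / fu x) : x y / x < y}.

Local Notation Fq := (tail_integral fq).
Local Notation Fu := (tail_integral fu).

Lemma tail_integral_ratio_lt a b : a < b -> Fq a * Fu b < Fq b * Fu a.
Proof.
move=> ab; set L := fq b / fu b.
have fqE x : fq x = fq x / fu x * fu x by rewrite divfK // gt_eqF.
have Lfu_int := integrableZl_real measurableT L fu_int.
rewrite (tail_integral_split fq_int (ltW ab)) (tail_integral_split fu_int (ltW ab)).
set Iq := \int[mu]_(x in _) fq x; set Iu := \int[mu]_(x in _) fu x.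
have Iu_gt0 : 0 < Iu by apply: Rintegral_itv_oc_gt0.
have Fub_gt0 : 0 < Fu b by apply: tail_integral_gt0.
have Fqb_gt0 : 0 < Fq b by apply: tail_integral_gt0.
(* the ratio is at most [L] on ]a, b] and exceeds it on ]b, +oo[ *)
have Iq_le : Iq <= L * Iu.
  rewrite /Iq /Iu -RintegralZl //; last exact: integrableS fu_int.
  apply: le_Rintegral => //; [exact: integrableS fq_int | exact: integrableS Lfu_int|].
  move=> x; rewrite /= in_itv /= => /andP[ax xb].
  rewrite [leLHS]fqE ler_wpM2r ?(ltW (fu_gt0 x)) // /L.
  by move: xb; rewrite le_eqVlt => /predU1P[-> //|xb]; exact/ltW/ratio_incr.
have Fqb_gt : L * Fu b < Fq b.
  rewrite -subr_gt0.
  have -> : Fq b - L * Fu b = tail_integral (fun x => fq x - L * fu x) b.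
    rewrite /tail_integral RintegralB //; last 2 first.
    - exact: integrableS fq_int.
    - exact: integrableS Lfu_int.
    by rewrite RintegralZl //; exact: integrableS fu_int.
  apply: tail_integral_gt0 => [|x bx]; first exact: integrableB_real.
  by rewrite subr_gt0 [ltRHS]fqE ltr_pM2r // /L; exact: ratio_incr.
nra.
Qed.
End TailRatio.

Lemma integrable_section (R : realType) (h : R -> R -> R) t :
  (forall g, 0 <= h t g) -> measurable_fun setT (fun p : R * R => h p.1 p.2) ->
  (\int[@lebesgue_measure R]_g (h t g)%:E < +oo)%E ->
  (@lebesgue_measure R).-integrable [set: R] (EFin \o h t).
Proof.
move=> h_ge0 hm hfin; apply/integrableP; split.
  apply/measurable_realfun.measurable_EFinP; exact: measurable_fun_pair2 t hm.
by under eq_integral do rewrite /= ger0_norm ?h_ge0//.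
Qed.

Lemma continuous_section (R : realType) (h : R -> R -> R) t :
  continuous (fun p : R * R => h p.1 p.2) -> continuous (h t).
Proof.
move=> hc g.
have pair_cvg : (t, x) @[x --> g] --> (t, g) by exact: cvg_pair (cvg_cst t) cvg_id.
exact: continuous_cvg _ (hc (t, g)) pair_cvg.
Qed.

Section PositiveInverse.
Variables (R : realType) (l : R -> R).

(* an inverse of [l] on the positive reals; junk value [0] elsewhere *)
Definition posinv (y : R) : R := xget 0 [set g | l g = y].

Hypotheses (l_cont : continuous l) (l_incr : {homo l : x y / x < y}).
Hypotheses (l_small : forall e, 0 < e -> exists g, l g < e)
           (l_big : forall M, exists g, M < l g).

Let l_ltr : {mono l : x y / x < y}. Proof. exact/leW_mono/le_mono. Qed.

Lemma posinvK y : 0 < y -> l (posinv y) = y.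
Proof.
move=> y0; rewrite /posinv; apply: (@xgetPex _ 0 [set g | l g = y]).
have [g1 g1y] := l_small y0; have [g2 yg2] := l_big y.
have g12 : g1 <= g2 by rewrite -(le_mono l_incr); apply/ltW/(lt_trans g1y yg2).
have [|g _ lg] := @IVT R l g1 g2 y g12 (continuous_subspaceT l_cont).
  by rewrite ge_min le_max (ltW g1y) (ltW yg2) /= orbT.
by exists g.
Qed.

Lemma posinv_lt y1 y2 : 0 < y1 -> y1 < y2 -> posinv y1 < posinv y2.
Proof. by move=> y10 y12; rewrite -l_ltr !posinvK //; exact: lt_trans y12. Qed.

Lemma posinv_continuous_at y0 : 0 < y0 -> {for y0, continuous posinv}.
Proof.
move=> y00; apply/cvgrPdist_lt => e e0.
set a0 := posinv y0.
have l_below : l (a0 - e) < y0 by rewrite -(posinvK y00) l_ltr ltrBlDr ltrDl.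
have l_above : y0 < l (a0 + e) by rewrite -(posinvK y00) l_ltr ltrDl.
near=> y.
have y_gt0 : 0 < y by near: y; exact: lt_nbhsr.
have a_below : a0 - e < posinv y.
  by rewrite -l_ltr posinvK //; near: y; exact: lt_nbhsr.
have a_above : posinv y < a0 + e.
  by rewrite -l_ltr posinvK //; near: y; exact: lt_nbhsl.
by rewrite ltr_distlC a_below a_above.
Unshelve. all: by end_near. Qed.
End PositiveInverse.

Section Threshold.
Variables (R : realType) (pi xq xu : R).
Hypothesis pi01 : 0 < pi < 1.

Lemma thr_gt0 t : -xu < t < xq -> 0 < thr pi xq xu t.
Proof.
have /andP[p0 p1] := pi01; move=> /andP[t1 t2].
by rewrite /thr divr_gt0 // mulr_gt0 // ?subr_gt0 // -ltrBlDl sub0r.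
Qed.

Lemma thr_lt t1 t2 : -xu < t1 -> t2 < xq -> t1 < t2 ->
  thr pi xq xu t1 < thr pi xq xu t2.
Proof.
have /andP[p0 p1] := pi01; move=> t1_gt t2_lt t12.
have d1 : 0 < pi * (xq - t1) by rewrite mulr_gt0 // subr_gt0; exact: lt_trans t2_lt.
have d2 : 0 < pi * (xq - t2) by rewrite mulr_gt0 // subr_gt0.
rewrite /thr ltr_pdivrMr // mulrAC ltr_pdivlMr // -subr_gt0.
have -> : (1 - pi) * (xu + t2) * (pi * (xq - t1))
          - (1 - pi) * (xu + t1) * (pi * (xq - t2))
        = ((1 - pi) * pi) * ((t2 - t1) * (xq + xu)) by ring.
have xqu_gt0 : 0 < xq + xu by lra.
by rewrite !mulr_gt0 // ?subr_gt0.
Qed.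

Lemma thr_continuous_at t : t < xq -> {for t, continuous (thr pi xq xu)}.
Proof.
have /andP[p0 _] := pi01; move=> tq; rewrite /thr.
apply: cvgM.
  by apply: cvgM; [exact: cvg_cst | apply: cvgD; [exact: cvg_cst | exact: cvg_id]].
apply: cvgV; first by rewrite mulf_neq0 ?gt_eqF // subr_gt0.
by apply: cvgM; [exact: cvg_cst | apply: cvgB; [exact: cvg_cst | exact: cvg_id]].
Qed.
End Threshold.

Section RegretLimit.
Variables (R : realType) (xq xu c : R).
Hypotheses (xq_gt0 : 0 < xq) (xu_gt0 : 0 < xu).

Definition payoff (Q : bool) : R :=
  (if Q then 1 else 0) * xq - (1 - (if Q then 1 else 0)) * xu.

(* The acceptance indicator of the limit is [c <= N s0], not [c < N s0]:
   scores above [s0] with [N s0 = c] are accepted. *)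
Definition regret_from_above (s0 : R) (Q : bool) : R :=
  Nval xq xu s0 - (if c <= Nval xq xu s0 then payoff Q else 0).

Lemma Pval_Aprime s Q : Pval xq xu c s Q = if Aprime xq xu c s then payoff Q else 0.
Proof. by rewrite /Pval; case: ifP; rewrite ?mul1r ?mul0r. Qed.

Lemma Nval_lt s t : s < t -> Nval xq xu s < Nval xq xu t.
Proof.
move=> st; rewrite /Nval -subr_gt0.
have -> : t * xq - (1 - t) * xu - (s * xq - (1 - s) * xu) = (t - s) * (xq + xu) by ring.
by rewrite mulr_gt0 ?subr_gt0 ?addr_gt0.
Qed.

Lemma Nval_continuous : continuous (Nval xq xu).
Proof.
move=> s; apply: cvgB; first by apply: cvgM; [exact: cvg_id | exact: cvg_cst].
by apply: cvgM; [apply: cvgB; [exact: cvg_cst | exact: cvg_id] | exact: cvg_cst].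
Qed.

Lemma regret_cvg_from_above (Q : bool) (T : Type) (F : set_system T) {FF : Filter F}
    (f : T -> R) (s0 : R) :
  f x @[x --> F] --> s0 -> (\forall x \near F, s0 < f x) ->
  regret xq xu c (f x) Q @[x --> F] --> regret_from_above s0 Q.
Proof.
move=> f_cvg f_gt.
have N_cvg : Nval xq xu (f x) @[x --> F] --> Nval xq xu s0.
  exact: (continuous_cvg _ (@Nval_continuous s0) f_cvg).
rewrite /regret_from_above; have [cle|clt] := leP c (Nval xq xu s0).
- apply: cvg_trans (near_eq_cvg _) (cvgB N_cvg (cvg_cst (payoff Q))).
  near=> x; rewrite /regret Pval_Aprime /Aprime (le_lt_trans cle) //.
  by apply: Nval_lt; near: x.
- have N_lt : \forall x \near F, Nval xq xu (f x) < c by exact: cvgr_lt N_cvg _ clt.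
  rewrite subr0; apply: cvg_trans (near_eq_cvg _) N_cvg.
  near=> x; rewrite /regret Pval_Aprime /Aprime ltNge ltW ?subr0 //.
  by near: x.
Unshelve. all: by end_near. Qed.
End RegretLimit.

Section Scores.
Variables (R : realType) (hq hu : R -> R -> R) (pi xq xu theta : R).
Local Notation mu := (@lebesgue_measure R).
Hypothesis pi01 : 0 < pi < 1.
Hypotheses (hq_gt0 : forall g, 0 < hq theta g) (hu_gt0 : forall g, 0 < hu theta g).
Hypotheses (hq_int : mu.-integrable [set: R] (EFin \o hq theta))
           (hu_int : mu.-integrable [set: R] (EFin \o hu theta)).
Local Notation l := (lratio hq hu theta).
Hypotheses (l_cont : continuous l) (l_incr : {homo l : x y / x < y}).
Hypotheses (l_small : forall e, 0 < e -> exists g, l g < e)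
           (l_big : forall M, exists g, M < l g).

Local Notation Fq := (tail_integral (hq theta)).
Local Notation Fu := (tail_integral (hu theta)).
Local Notation s1 := (Defs.s1 hq hu pi xq xu theta).
Local Notation s2 := (Defs.s2 hq hu pi xq xu theta).

Let pi_gt0 : 0 < pi. Proof. by case/andP: pi01. Qed.
Let pi1_gt0 : 0 < 1 - pi. Proof. by case/andP: pi01; rewrite subr_gt0. Qed.
Let l_ltr : {mono l : x y / x < y}. Proof. exact/leW_mono/le_mono. Qed.

Definition cutoff (tau : R) : R := posinv l (thr pi xq xu tau).

Definition accepted_mass (a : R) : R := pi * Fq a + (1 - pi) * Fu a.
Definition qualified_share (a : R) : R := pi * Fq a / accepted_mass a.
Definition acceptance_rate (a : R) : R := accepted_mass a / margmass hq hu pi theta.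

Lemma accset_cutoff tau : -xu < tau < xq ->
  accset hq hu pi xq xu theta tau = `]cutoff tau, +oo[%classic.
Proof.
move=> tau_in; have l_cutoff : l (cutoff tau) = thr pi xq xu tau.
  by apply: posinvK => //; exact: thr_gt0.
by rewrite /accset; apply/seteqP; split => g /=; rewrite in_itv /= andbT -l_cutoff l_ltr.
Qed.

Lemma s1_cutoff tau : -xu < tau < xq -> s1 tau = qualified_share (cutoff tau).
Proof. by move=> tau_in; rewrite /Defs.s1 /accmass /smass accset_cutoff. Qed.

Lemma s2_cutoff tau : -xu < tau < xq -> s2 tau = acceptance_rate (cutoff tau).
Proof. by move=> tau_in; rewrite /Defs.s2 /accmass /smass accset_cutoff. Qed.

Lemma cutoff_lt t1 t2 : -xu < t1 -> t2 < xq -> t1 < t2 -> cutoff t1 < cutoff t2.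
Proof.
move=> t1_gt t2_lt t12; apply: posinv_lt => //; last exact: thr_lt.
by apply: thr_gt0 => //; rewrite t1_gt (lt_trans t12 t2_lt).
Qed.

Lemma cutoff_continuous_at t : -xu < t < xq -> {for t, continuous cutoff}.
Proof.
move=> /[dup] t_in /andP[_ t_lt].
apply: (continuous_cvg _ _ (thr_continuous_at pi01 t_lt)).
by apply: posinv_continuous_at => //; exact: thr_gt0.
Qed.

Lemma margmass_gt0 : 0 < margmass hq hu pi theta.
Proof.
by rewrite /margmass /smass addr_gt0 // mulr_gt0 // Rintegral_setT_gt0.
Qed.

Lemma accepted_mass_gt0 a : 0 < accepted_mass a.
Proof. by rewrite addr_gt0 // mulr_gt0 // tail_integral_gt0. Qed.

Lemma accepted_mass_lt a b : a < b -> accepted_mass b < accepted_mass a.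
Proof.
by move=> ab; apply: ltrD; rewrite ltr_pM2l //; exact: tail_integral_lt.
Qed.

Lemma accepted_mass_continuous : continuous accepted_mass.
Proof.
move=> a; have Fq_cont : continuous Fq := tail_integral_continuous hq_int.
have Fu_cont : continuous Fu := tail_integral_continuous hu_int.
exact: cvgD (cvgM (cvg_cst _) (Fq_cont a)) (cvgM (cvg_cst _) (Fu_cont a)).
Qed.

Lemma qualified_share_lt a b : a < b -> qualified_share a < qualified_share b.
Proof.
move=> ab; have ratio := tail_integral_ratio_lt hq_gt0 hu_gt0 hq_int hu_int l_incr ab.
rewrite /qualified_share ltr_pdivrMr ?accepted_mass_gt0 // mulrAC.
rewrite ltr_pdivlMr ?accepted_mass_gt0 // -subr_gt0.
have -> : pi * Fq b * accepted_mass a - pi * Fq a * accepted_mass b =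
  pi * (1 - pi) * (Fq b * Fu a - Fq a * Fu b) by rewrite /accepted_mass; ring.
by rewrite !mulr_gt0 // subr_gt0.
Qed.

Lemma acceptance_rate_lt a b : a < b -> acceptance_rate b < acceptance_rate a.
Proof.
move=> ab; rewrite /acceptance_rate ltr_pM2r ?invr_gt0 ?margmass_gt0 //.
exact: accepted_mass_lt.
Qed.

Lemma qualified_share_continuous : continuous qualified_share.
Proof.
move=> a; have Fq_cont : continuous Fq := tail_integral_continuous hq_int.
have m_cont : continuous accepted_mass := accepted_mass_continuous.
apply: cvgM (cvgM (cvg_cst _) (Fq_cont a)) (cvgV _ (m_cont a)).
by rewrite gt_eqF ?accepted_mass_gt0.
Qed.

Lemma acceptance_rate_continuous : continuous acceptance_rate.
Proof.
have m_cont : continuous accepted_mass := accepted_mass_continuous.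
by move=> a; apply: cvgM (m_cont a) (cvg_cst _).
Qed.

Lemma s1_lt t1 t2 : -xu < t1 -> t2 < xq -> t1 < t2 -> s1 t1 < s1 t2.
Proof.
move=> t1_gt t2_lt t12.
have t1_in : -xu < t1 < xq by rewrite t1_gt (lt_trans t12 t2_lt).
have t2_in : -xu < t2 < xq by rewrite t2_lt (lt_trans t1_gt t12).
by rewrite !s1_cutoff // qualified_share_lt // cutoff_lt.
Qed.

Lemma s2_lt t1 t2 : -xu < t1 -> t2 < xq -> t1 < t2 -> s2 t2 < s2 t1.
Proof.
move=> t1_gt t2_lt t12.
have t1_in : -xu < t1 < xq by rewrite t1_gt (lt_trans t12 t2_lt).
have t2_in : -xu < t2 < xq by rewrite t2_lt (lt_trans t1_gt t12).
by rewrite !s2_cutoff // acceptance_rate_lt // cutoff_lt.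
Qed.

Lemma s1_cvg t : -xu < t < xq -> s1 x @[x --> t] --> s1 t.
Proof.
move=> /[dup] t_in /andP[t_gt t_lt]; rewrite s1_cutoff //.
have qs_cont : continuous qualified_share := qualified_share_continuous.
apply: cvg_trans (near_eq_cvg _)
  (continuous_cvg _ (qs_cont _) (cutoff_continuous_at t_in)).
near=> x; rewrite s1_cutoff //; apply/andP; split; near: x.
- exact: lt_nbhsr.
- exact: lt_nbhsl.
Unshelve. all: by end_near. Qed.

Lemma s2_cvg t : -xu < t < xq -> s2 x @[x --> t] --> s2 t.
Proof.
move=> /[dup] t_in /andP[t_gt t_lt]; rewrite s2_cutoff //.
have ar_cont : continuous acceptance_rate := acceptance_rate_continuous.
apply: cvg_trans (near_eq_cvg _)
  (continuous_cvg _ (ar_cont _) (cutoff_continuous_at t_in)).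
near=> x; rewrite s2_cutoff //; apply/andP; split; near: x.
- exact: lt_nbhsr.
- exact: lt_nbhsl.
Unshelve. all: by end_near. Qed.
End Scores.

Theorem mainTheorem12 (R : realType) (hq hu : R -> R -> R) (pi xq xu c : R)
  (theta taus : R) (Q : bool) :
  0 < pi < 1 -> 0 < xq -> 0 < xu ->
  (forall t g, 0 < hq t g) -> (forall t g, 0 < hu t g) ->
  measurable_fun setT (fun p : R * R => hq p.1 p.2) ->
  measurable_fun setT (fun p : R * R => hu p.1 p.2) ->
  (\int[(@lebesgue_measure R \x @lebesgue_measure R)%E]_p (hq p.1 p.2)%:E = 1)%E ->
  (\int[(@lebesgue_measure R \x @lebesgue_measure R)%E]_p (hu p.1 p.2)%:E = 1)%E ->
  (\int[@lebesgue_measure R]_g (hq theta g)%:E < +oo)%E ->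
  (\int[@lebesgue_measure R]_g (hu theta g)%:E < +oo)%E ->
  continuous (fun p : R * R => lratio hq hu p.1 p.2) ->
  (forall g t1 t2, t1 < t2 -> lratio hq hu t1 g < lratio hq hu t2 g) ->
  (forall t g1 g2, g1 < g2 -> lratio hq hu t g1 < lratio hq hu t g2) ->
  (forall t e, 0 < e -> exists g, lratio hq hu t g < e) ->
  (forall t M, exists g, M < lratio hq hu t g) ->
  -xu < c < xq ->
  -xu < taus < xq ->
  (forall tau, -xu < tau < xq ->
     (s1 hq hu pi xq xu theta tau = s2 hq hu pi xq xu theta tau <-> tau = taus)) ->
  phi hq hu pi theta < beta xq xu c ->
  exists L : R,
    (regret xq xu c (s1 hq hu pi xq xu theta tau) Q @[tau --> taus^'+] --> L) /\
    (regret xq xu c (s2 hq hu pi xq xu theta tau) Q @[tau --> taus^'-] --> L).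
Proof.
move=> pi01 xq_gt0 xu_gt0 hq_gt0 hu_gt0 hq_m hu_m _ _ hq_fin hu_fin l_cont _ l_incr
  l_small l_big _ taus_in equalizing _.
have /andP[taus_gt taus_lt] := taus_in.
have hq_theta_gt0 := hq_gt0 theta; have hu_theta_gt0 := hu_gt0 theta.
have hq_int := integrable_section (fun g => ltW (hq_theta_gt0 g)) hq_m hq_fin.
have hu_int := integrable_section (fun g => ltW (hu_theta_gt0 g)) hu_m hu_fin.
have l_theta_cont := continuous_section (t := theta) l_cont.
have l_theta_incr : {homo lratio hq hu theta : x y / x < y} := l_incr theta.
have l_theta_small := l_small theta; have l_theta_big := l_big theta.
set S1 := s1 hq hu pi xq xu theta; set S2 := s2 hq hu pi xq xu theta.
have S1_lt t1 t2 : -xu < t1 -> t2 < xq -> t1 < t2 -> S1 t1 < S1 t2.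
  by move=> *; apply: s1_lt => //.
have S2_lt t1 t2 : -xu < t1 -> t2 < xq -> t1 < t2 -> S2 t2 < S2 t1.
  by move=> *; apply: s2_lt => //.
have S1_right : \forall tau \near taus^'+, S1 taus < S1 tau.
  near=> tau; apply: (S1_lt _ _ taus_gt); near: tau.
  - exact: nbhs_right_lt.
  - exact: nbhs_right_gt.
have S2_left : \forall tau \near taus^'-, S2 taus < S2 tau.
  near=> tau; apply: (S2_lt _ _ _ taus_lt); near: tau.
  - exact: nbhs_left_gt.
  - exact: nbhs_left_lt.
exists (regret_from_above xq xu c (S1 taus) Q); split.
- apply: regret_cvg_from_above S1_right => //.
  exact/cvg_at_right_filter/s1_cvg.
- have -> : S1 taus = S2 taus by exact/equalizing.
  apply: regret_cvg_from_above S2_left => //.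
  exact/cvg_at_left_filter/s2_cvg.
Unshelve. all: by end_near. Qed.
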